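(* Fix an integer $k\ge1$. Let $G$ be the directed graph with vertices $v_{i,p}$ for $i\in\{1,2,3,\dots\}$ and $p\in\{1,\dots,k\}$, with an edge from $v_{i,p}$ to $v_{j,q}$ if and only if $j=i+1$ and $|p-q|\le1$, and with birthdates $t(v_{i,p})=i$. Then $(G,t)$ is an infinite biosphere, and $G$ has exactly $k$ distinct $\mathrm{IAP}\cap\mathrm{CONV}\cap\mathrm{CA}\cap\mathrm{REF}$-maximal sets, namely the sets $S_\ell=\{v_{1,\ell}\}\cup\{w: w \text{ is a descendant of } v_{1,\ell}\}$ for $\ell\in\{1,\dots,k\}$. Moreover $S_\ell\sim S_m$ for all $\ell,m\in\{1,\dots,k\}$.
   Context: An infinite biosphere is a directed graph $G$ together with a function $t$ assigning a real number $t(v)$ to each vertex, such that: (1) if $v$ is a parent of $w$ (edge from $v$ to $w$) then $t(v)<t(w)$; (2) for every $r\in\mathbb R$ at most finitely many vertices $v$ have $t(v)<r$; (3) every vertex has finitely many children; (4) $G$ is infinite. $v$ is an ancestor of $w$ (and $w$ a descendant of $v$) if there is a directed path $v=v_1,\dots,v_n=w$ with $n>1$. $\mathrm{IAP}$: sets $S$ of vertices such that no $v\in S$ has both infinitely many descendants in $S$ and infinitely many non-descendants in $S$. $\mathrm{CONV}$: sets $S$ such that every vertex having an ancestor in $S$ and a descendant in $S$ lies in $S$. $\mathrm{CA}$: sets $S$ for which there exists $v\in S$ such that every $w\in S$ with $w\neq v$ is a descendant of $v$. $\mathrm{REF}$: sets $S$ such that every $v\in S$ with infinitely many descendants in $G$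 has infinitely many descendants in $S$. An $\mathrm{IAP}\cap\mathrm{CONV}\cap\mathrm{CA}\cap\mathrm{REF}$-maximal set is a nonempty set in $\mathrm{IAP}\cap\mathrm{CONV}\cap\mathrm{CA}\cap\mathrm{REF}$ no proper superset of which lies in $\mathrm{IAP}\cap\mathrm{CONV}\cap\mathrm{CA}\cap\mathrm{REF}$. For $S\subseteq G$, a vertex $v\in S$ is a generator of $S$ if $S$ contains at most finitely many non-descendants of $v$; $\mathrm{gen}(S)$ is the set of generators. For infinite $S_1,S_2\subseteq G$, $S_1\sim S_2$ means the symmetric difference $\mathrm{gen}(S_1)\triangle\mathrm{gen}(S_2)$ is finite. *)

From Stdlib Require Import Reals ZArith List Relations Bool.
Import ListNotations.

Section Biosphere.
Variable V : Type.
Variable E : V -> V -> Prop.   (* E v w : edge from v to w, i.e. v is a parent of w *)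

Definition finite_set (S : V -> Prop) : Prop :=
  exists l : list V, forall v, S v -> In v l.
Definition infinite_set (S : V -> Prop) : Prop := ~ finite_set S.

Definition desc (v w : V) : Prop := clos_trans V E v w.

Definition infinite_biosphere (t : V -> R) : Prop :=
  (forall v w, E v w -> (t v < t w)%R) /\
  (forall r : R, finite_set (fun v => (t v < r)%R)) /\
  (forall v, finite_set (E v)) /\
  infinite_set (fun _ => True).

Definition IAP (S : V -> Prop) : Prop :=
  forall v, S v ->
    ~ (infinite_set (fun w => S w /\ desc v w) /\
       infinite_set (fun w => S w /\ ~ desc v w)).

Definition CONV (S : V -> Prop) : Prop :=
  forall u, (exists a, S a /\ desc a u) -> (exists d, S d /\ desc u d) -> S u.

Definition CA (S : V -> Prop) : Prop :=
  exists v, S v /\ forall w, S w -> w <> v -> desc v w.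

Definition REF (S : V -> Prop) : Prop :=
  forall v, S v -> infinite_set (desc v) -> infinite_set (fun w => S w /\ desc v w).

Definition ICCR (S : V -> Prop) : Prop := IAP S /\ CONV S /\ CA S /\ REF S.

Definition ICCR_maximal (S : V -> Prop) : Prop :=
  (exists v, S v) /\ ICCR S /\
  forall T, ICCR T -> (forall x, S x -> T x) -> forall x, T x -> S x.

Definition generator (S : V -> Prop) (v : V) : Prop :=
  S v /\ finite_set (fun w => S w /\ ~ desc v w).

Definition gen_equiv (S1 S2 : V -> Prop) : Prop :=
  infinite_set S1 /\ infinite_set S2 /\
  finite_set (fun v => (generator S1 v /\ ~ generator S2 v) \/
                       (generator S2 v /\ ~ generator S1 v)).
End Biosphere.

Definition vtx (k : nat) : Type :=
  { ip : nat * nat | ((1 <=? fst ip) && (1 <=? snd ip) && (snd ip <=? k))%bool = true }.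

Definition vedge (k : nat) (x y : vtx k) : Prop :=
  fst (proj1_sig y) = fst (proj1_sig x) + 1 /\
  (Z.abs (Z.of_nat (snd (proj1_sig x)) - Z.of_nat (snd (proj1_sig y))) <= 1)%Z.

Definition vbirth (k : nat) (x : vtx k) : R := INR (fst (proj1_sig x)).

Definition S_ell (k l : nat) (w : vtx k) : Prop :=
  exists x : vtx k, proj1_sig x = (1, l) /\ (w = x \/ desc (vtx k) (vedge k) x w).

(* In this graph every vertex is an ancestor of all vertices at least k levels later, so every
   vertex has only finitely many non-descendants.  Then IAP holds for every set and every element
   of a set is a generator of it.  CONV, CA and REF are satisfied by the cone {v} ∪ desc(v) of any
   vertex, and a CA set lies in the cone of its root; since every vertex lies in the cone of a
   first-level vertex, which has no ancestors, the maximal sets are exactly the cones of the k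
   first-level vertices.  Two such cones differ only by non-descendants of their roots, a finite
   set, and their generators are their elements, whence S_l ~ S_m. *)

From Stdlib Require Import Reals ZArith List Relations.
From Stdlib Require Import Lia Lra Bool Eqdep_dec Classical FunctionalExtensionality PropExtensionality.

Section Cones.
Variable V : Type.
Variable E : V -> V -> Prop.

Local Notation desc := (desc V E).
Local Notation finite_set := (finite_set V).
Local Notation infinite_set := (infinite_set V).

Definition cone (r w : V) : Prop := w = r \/ desc r w.
Definition source (r : V) : Prop := forall u, ~ desc u r.
Definition cofinite_desc : Prop := forall v, finite_set (fun w => ~ desc v w).

Lemma finite_set_sub (S T : V -> Prop) :
  (forall v, S v -> T v) -> finite_set T -> finite_set S.
Proof. intros HST [l Hl]. exists l. auto. Qed.

Lemma finite_set_union (S T : V -> Prop) :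
  finite_set S -> finite_set T -> finite_set (fun v => S v \/ T v).
Proof. intros [l Hl] [l' Hl']. exists (l ++ l'). intros v [Sv|Tv]; apply in_or_app; auto. Qed.

Lemma cone_trans u v w : cone u v -> cone v w -> cone u w.
Proof.
  intros [->|Huv] [->|Hvw]; [left| right | right | right]; auto.
  exact (t_trans _ _ _ _ _ Huv Hvw).
Qed.

Lemma cone_CONV r : CONV V E (cone r).
Proof. intros u [a [Ha Hau]] _. exact (cone_trans r a u Ha (or_intror Hau)). Qed.

Lemma cone_CA r : CA V E (cone r).
Proof. exists r. split; [now left|]. intros w [->|Hw] Hne; [contradiction | exact Hw]. Qed.

Lemma cone_REF r : REF V E (cone r).
Proof.
  intros v Hv Hinf Hfin. apply Hinf.
  apply finite_set_sub with (fun w => cone r w /\ desc v w); [|exact Hfin].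
  intros w Hw. exact (conj (cone_trans r v w Hv (or_intror Hw)) Hw).
Qed.

Lemma generator_of_cofinite_desc S v : cofinite_desc -> S v -> generator V E S v.
Proof.
  intros Hcof Sv. split; [exact Sv|].
  apply finite_set_sub with (fun w => ~ desc v w); [now intros w []| apply Hcof].
Qed.

Lemma IAP_of_cofinite_desc S : cofinite_desc -> IAP V E S.
Proof. intros Hcof v Sv [_ Hinf]. exact (Hinf (proj2 (generator_of_cofinite_desc S v Hcof Sv))). Qed.

Lemma cone_ICCR r : cofinite_desc -> ICCR V E (cone r).
Proof.
  intro Hcof. repeat split;
    [apply IAP_of_cofinite_desc | apply cone_CONV | apply cone_CA | apply cone_REF]; auto.
Qed.

Lemma CA_sub_cone S : CA V E S -> exists v, S v /\ forall w, S w -> cone v w.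
Proof.
  intros [v [Sv Hv]]. exists v. split; [exact Sv|].
  intros w Sw. destruct (classic (w = v)) as [->|Hne]; [now left | right; auto].
Qed.

Lemma CA_sub_cone_source S r : source r -> CA V E S -> S r -> forall w, S w -> cone r w.
Proof.
  intros Hr HCA Sr. destruct (CA_sub_cone S HCA) as [v [Sv Hv]].
  destruct (Hv r Sr) as [->|Hvr]; [exact Hv | destruct (Hr v Hvr)].
Qed.

Lemma ICCR_maximal_cone (root : V -> Prop) :
  cofinite_desc ->
  (forall r, root r -> source r) ->
  (forall v, exists r, root r /\ cone r v) ->
  forall S, ICCR_maximal V E S <-> exists r, root r /\ forall w, S w <-> cone r w.
Proof.
  intros Hcof Hsrc Hcover S. split.
  - intros [_ [[_ [_ [HCA _]]] Hmax]].
    destruct (CA_sub_cone S HCA) as [v [_ Hv]]. destruct (Hcover v) as [r [Hr Hrv]].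
    assert (HSr : forall w, S w -> cone r w) by (intros w Sw; exact (cone_trans r v w Hrv (Hv w Sw))).
    exists r. split; [exact Hr|]. intro w. split; [apply HSr|].
    exact (Hmax (cone r) (cone_ICCR r Hcof) HSr w).
  - intros [r [Hr HS]].
    assert (S = cone r) as -> by (extensionality w; apply propositional_extensionality, HS).
    split; [exists r; now left|]. split; [exact (cone_ICCR r Hcof)|].
    intros T [_ [_ [HCA _]]] Hsub.
    exact (CA_sub_cone_source T r (Hsrc r Hr) HCA (Hsub r (or_introl eq_refl))).
Qed.

Lemma cone_eq_source r r' : source r -> (forall w, cone r w <-> cone r' w) -> r = r'.
Proof. intros Hr Hrr'. destruct (proj1 (Hrr' r) (or_introl eq_refl)) as [e|d]; [exact e | destruct (Hr r' d)]. Qed.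

Lemma infinite_cone r : cofinite_desc -> infinite_set (fun _ => True) -> infinite_set (cone r).
Proof.
  intros Hcof Hinf Hfin. apply Hinf.
  apply finite_set_sub with (fun w => cone r w \/ ~ desc r w); [|exact (finite_set_union _ _ Hfin (Hcof r))].
  intros w _. destruct (classic (desc r w)); [left; now right | now right].
Qed.

Lemma gen_equiv_cone r r' :
  cofinite_desc -> infinite_set (fun _ => True) -> gen_equiv V E (cone r) (cone r').
Proof.
  intros Hcof Hinf. split; [|split]; [apply infinite_cone; auto .. |].
  apply finite_set_sub with (fun v => ~ desc r v \/ ~ desc r' v);
    [|exact (finite_set_union _ _ (Hcof r) (Hcof r'))].
  intros v [[[Hv _] Hng]|[[Hv _] Hng]]; [right | left]; intro Hd;
    apply Hng, generator_of_cofinite_desc; auto; now right.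
Qed.

End Cones.

Arguments cone {V} E r w.
Arguments source {V} E r.
Arguments cofinite_desc {V} E.

Notation level x := (fst (proj1_sig x)).
Notation column x := (snd (proj1_sig x)).

Lemma vtx_bounds k (x : vtx k) : 1 <= level x /\ 1 <= column x /\ column x <= k.
Proof.
  destruct x as [[i p] h]; cbn [proj1_sig fst snd] in *.
  apply andb_prop in h as [h h3]; apply andb_prop in h as [h1 h2].
  apply Nat.leb_le in h1, h2, h3. lia.
Qed.

Lemma vtx_eq k (x y : vtx k) : proj1_sig x = proj1_sig y -> x = y.
Proof.
  destruct x as [a ha], y as [b hb]; cbn; intros ->.
  f_equal. apply UIP_dec, bool_dec.
Qed.

Lemma vtx_cond k i p : 1 <= i -> 1 <= p -> p <= k ->
  ((1 <=? fst (i, p)) && (1 <=? snd (i, p)) && (snd (i, p) <=? k))%bool = true.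
Proof. intros h1 h2 h3. cbn [fst snd]. apply Nat.leb_le in h1, h2, h3. now rewrite h1, h2, h3. Qed.

Lemma vtx_first_level k (r : vtx k) : level r = 1 -> proj1_sig r = (1, column r).
Proof. destruct r as [[i p] h]. cbn [proj1_sig fst snd]. now intros ->. Qed.

Definition vertex k i p (h1 : 1 <= i) (h2 : 1 <= p) (h3 : p <= k) : vtx k :=
  exist _ (i, p) (vtx_cond k i p h1 h2 h3).

Definition first_vertex k l (hl : 1 <= l <= k) : vtx k :=
  vertex k 1 l (le_n 1) (proj1 hl) (proj2 hl).

Definition vertex_opt k (ip : nat * nat) : list (vtx k) :=
  match Sumbool.sumbool_of_bool ((1 <=? fst ip) && (1 <=? snd ip) && (snd ip <=? k)) with
  | left h => cons (exist _ ip h) nil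
  | right _ => nil
  end.

Definition vertices_below k N : list (vtx k) :=
  flat_map (vertex_opt k) (list_prod (seq 0 N) (seq 0 (S k))).

Lemma in_vertices_below k N (x : vtx k) : level x < N -> In x (vertices_below k N).
Proof.
  intro H. destruct (vtx_bounds k x) as (?&?&?).
  apply in_flat_map. exists (proj1_sig x). split.
  - destruct x as [[i p] h]; cbn [proj1_sig fst snd] in *.
    apply in_prod; apply in_seq; lia.
  - unfold vertex_opt. destruct (Sumbool.sumbool_of_bool _) as [h|h].
    + left. now apply vtx_eq.
    + destruct x as [ip h']. cbn [proj1_sig] in h. congruence.
Qed.

Lemma finite_of_level_bounded k (S : vtx k -> Prop) N :
  (forall v, S v -> level v < N) -> finite_set (vtx k) S.
Proof. intro H. exists (vertices_below k N). intros v Sv. apply in_vertices_below, H, Sv. Qed.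

Lemma infinite_of_level_unbounded k (S : vtx k -> Prop) :
  (forall N, exists v, S v /\ N <= level v) -> infinite_set (vtx k) S.
Proof.
  intros H [l Hl].
  set (M := list_max (map (fun v : vtx k => level v) l)).
  destruct (H (M + 1)) as (v & Sv & Hv).
  assert (level v <= M).
  { refine (proj1 (Forall_forall _ _) (proj1 (list_max_le _ M) (le_n M)) _ _).
    apply in_map_iff. exists v. auto. }
  lia.
Qed.

Lemma desc_level_lt k (x y : vtx k) : desc (vtx k) (vedge k) x y -> level x < level y.
Proof. induction 1 as [x y [h _]|x y z _ IH1 _ IH2]; lia. Qed.

Lemma first_level_source k (r : vtx k) : level r = 1 -> source (vedge k) r.
Proof. intros Hr u Hu. apply desc_level_lt in Hu. destruct (vtx_bounds k u). lia. Qed.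

Lemma vedge_toward k (x : vtx k) q n :
  1 <= q <= k -> (Z.abs (Z.of_nat (column x) - Z.of_nat q) <= Z.of_nat (S n))%Z ->
  exists y, vedge k x y /\ (Z.abs (Z.of_nat (column y) - Z.of_nat q) <= Z.of_nat n)%Z.
Proof.
  intros Hq Hd. destruct (vtx_bounds k x) as (hx1 & hx2 & hx3).
  assert (hi : 1 <= level x + 1) by lia.
  destruct (lt_eq_lt_dec (column x) q) as [[hlt|heq]|hgt].
  - assert (h2 : 1 <= column x + 1) by lia. assert (h3 : column x + 1 <= k) by lia.
    exists (vertex k _ _ hi h2 h3). split; [split|]; cbn [vertex proj1_sig fst snd]; lia.
  - exists (vertex k _ _ hi hx2 hx3). split; [split|]; cbn [vertex proj1_sig fst snd]; lia.
  - assert (h2 : 1 <= column x - 1) by lia. assert (h3 : column x - 1 <= k) by lia.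
    exists (vertex k _ _ hi h2 h3). split; [split|]; cbn [vertex proj1_sig fst snd]; lia.
Qed.

Lemma desc_of_column_gap k d (x y : vtx k) :
  level y = level x + S d ->
  (Z.abs (Z.of_nat (column x) - Z.of_nat (column y)) <= Z.of_nat (S d))%Z ->
  desc (vtx k) (vedge k) x y.
Proof.
  revert x. induction d as [|d IH]; intros x Hl Hc.
  - apply t_step. split; lia.
  - destruct (vtx_bounds k y) as (? & ? & ?).
    destruct (vedge_toward k x (column y) (S d)) as [z [[Hz1 Hz2] Hzc]]; [lia | exact Hc |].
    apply t_trans with z; [now apply t_step | apply IH; lia].
Qed.

Lemma desc_of_level_ge k (v w : vtx k) :
  level v + k <= level w -> desc (vtx k) (vedge k) v w.
Proof.
  intro H. destruct (vtx_bounds k v) as (?&?&?). destruct (vtx_bounds k w) as (?&?&?).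
  apply (desc_of_column_gap k (level w - level v - 1)); lia.
Qed.

Lemma vedge_cofinite_desc k : cofinite_desc (vedge k).
Proof.
  intro v. apply finite_of_level_bounded with (level v + k).
  intros w Hw. destruct (le_lt_dec (level v + k) (level w)); [|auto].
  exfalso. now apply Hw, desc_of_level_ge.
Qed.

Lemma vedge_cone_first_level k (v : vtx k) :
  exists r, level r = 1 /\ cone (vedge k) r v.
Proof.
  destruct (vtx_bounds k v) as (hv1 & hv2 & hv3).
  exists (vertex k 1 _ (le_n 1) hv2 hv3). split; [reflexivity|].
  destruct (Nat.eq_dec (level v) 1) as [e|e].
  - left. apply vtx_eq, vtx_first_level, e.
  - right. apply (desc_of_column_gap k (level v - 2)); cbn [vertex proj1_sig fst snd]; lia.
Qed.

Lemma S_ell_cone k l (r : vtx k) : proj1_sig r = (1, l) ->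
  forall w, S_ell k l w <-> cone (vedge k) r w.
Proof.
  intros Hr w. split.
  - intros [x [Hx Hw]]. replace r with x; [exact Hw | apply vtx_eq; congruence].
  - intro Hw. now exists r.
Qed.

Lemma vtx_infinite k : 1 <= k -> infinite_set (vtx k) (fun _ => True).
Proof.
  intro hk. apply infinite_of_level_unbounded. intro N. assert (h : 1 <= S N) by lia.
  exists (vertex k (S N) 1 h (le_n 1) hk). split; [exact I | cbn [vertex proj1_sig fst snd]; lia].
Qed.

Lemma vedge_biosphere k : 1 <= k -> infinite_biosphere (vtx k) (vedge k) (vbirth k).
Proof.
  intro hk. split; [|split; [|split]].
  - intros v w [h _]. apply lt_INR. lia.
  - intro r. apply finite_of_level_bounded with (Z.to_nat (up r)). intros v Hv.
    destruct (archimed r) as [ha _]. unfold vbirth in Hv. rewrite INR_IZR_INZ in Hv.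
    assert (Z.of_nat (level v) < up r)%Z by (apply lt_IZR; lra). lia.
  - intro v. apply finite_of_level_bounded with (level v + 2). intros w [h _]. lia.
  - now apply vtx_infinite.
Qed.

Theorem mainTheorem13 (k : nat) (hk : 1 <= k) :
  infinite_biosphere (vtx k) (vedge k) (vbirth k) /\
  (forall S : vtx k -> Prop,
     ICCR_maximal (vtx k) (vedge k) S <->
     exists l, 1 <= l <= k /\ forall w, S w <-> S_ell k l w) /\
  (forall l m, 1 <= l <= k -> 1 <= m <= k -> l <> m ->
     ~ (forall w, S_ell k l w <-> S_ell k m w)) /\
  (forall l m, 1 <= l <= k -> 1 <= m <= k ->
     gen_equiv (vtx k) (vedge k) (S_ell k l) (S_ell k m)).
Proof.
  pose proof (S_ell_cone k) as Hcone.
  pose proof (ICCR_maximal_cone _ (vedge k) (fun r => level r = 1) (vedge_cofinite_desc k)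
                (first_level_source k) (vedge_cone_first_level k)) as Hmax.
  split; [|split; [|split]].
  - now apply vedge_biosphere.
  - intro S. rewrite Hmax. split.
    + intros [r [Hr HS]]. destruct (vtx_bounds k r) as (_ & ? & ?).
      exists (column r). split; [lia|]. intro w.
      rewrite HS, (Hcone _ r (vtx_first_level k r Hr)). reflexivity.
    + intros [l [hl HS]]. exists (first_vertex k l hl). split; [reflexivity|].
      intro w. now rewrite HS, (Hcone _ (first_vertex k l hl)).
  - intros l m hl hm hlm Heq.
    assert (first_vertex k l hl = first_vertex k m hm) as Hlm.
    { apply (cone_eq_source _ (vedge k)); [now apply first_level_source|].
      intro w. now rewrite <- (Hcone l), <- (Hcone m). }
    apply (f_equal (fun x => column x)) in Hlm. exact (hlm Hlm).
  - intros l m hl hm.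
    assert (Heq : forall (S T : vtx k -> Prop), (forall w, S w <-> T w) -> S = T)
      by (intros S T HST; extensionality w; apply propositional_extensionality, HST).
    rewrite (Heq _ _ (Hcone l (first_vertex k l hl) eq_refl)),
            (Heq _ _ (Hcone m (first_vertex k m hm) eq_refl)).
    apply gen_equiv_cone; [apply vedge_cofinite_desc | now apply vtx_infinite].
Qed.
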